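(* Let $R$ be a $*$-ring. Then $R$ is strongly $J$-$*$-clean if and only if (1) $R$ is strongly $*$-clean, and (2) $R/M\cong\mathbb{Z}_2$ for all maximal ideals $M$ of $R$.
   Context: All rings are associative with identity. A $*$-ring is a ring $R$ with an involution $*$, i.e. a map $a\mapsto a^*$ with $(a+b)^*=a^*+b^*$, $(ab)^*=b^*a^*$, $(a^* )^*=a$. $U(R)$ denotes the group of units and $J(R)$ the Jacobson radical of $R$. A projection is an element $e$ with $e^2=e=e^*$. $R$ is strongly $J$-$*$-clean if every $a\in R$ can be written $a=e+u$ with $e$ a projection, $u\in J(R)$ and $ae=ea$. $R$ is strongly $*$-clean if every $a\in R$ can be written $a=e+u$ with $e$ a projection, $u\in U(R)$ and $eu=ue$. Maximal ideals are two-sided. *)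

From HB Require Import structures.
From mathcomp Require Import all_boot all_order all_algebra.
Set Implicit Arguments. Unset Strict Implicit. Unset Printing Implicit Defensive.
Import GRing.Theory.
Local Open Scope ring_scope.

(* Rings: associative with identity (possibly the zero ring): pzRingType.
   Subsets of R are predicates R -> Prop. *)

Definition is_involution (R : pzRingType) (star : R -> R) : Prop :=
  (forall a b, star (a + b) = star a + star b) /\
  (forall a b, star (a * b) = star b * star a) /\
  (forall a, star (star a) = a).

Definition is_unit (R : pzRingType) (a : R) : Prop :=
  exists b, a * b = 1 /\ b * a = 1.

Definition left_ideal (R : pzRingType) (I : R -> Prop) : Prop :=
  I 0 /\ (forall x y, I x -> I y -> I (x + y)) /\ (forall x, I x -> I (- x)) /\
  (forall r x, I x -> I (r * x)).

Definition two_sided_ideal (R : pzRingType) (I : R -> Prop) : Prop :=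
  left_ideal I /\ (forall r x, I x -> I (x * r)).

Definition maximal_left_ideal (R : pzRingType) (L : R -> Prop) : Prop :=
  left_ideal L /\ ~ L 1 /\
  (forall L' : R -> Prop, left_ideal L' -> (forall x, L x -> L' x) -> ~ L' 1 ->
     forall x, L' x -> L x).

Definition maximal_ideal (R : pzRingType) (M : R -> Prop) : Prop :=
  two_sided_ideal M /\ ~ M 1 /\
  (forall M' : R -> Prop, two_sided_ideal M' -> (forall x, M x -> M' x) -> ~ M' 1 ->
     forall x, M' x -> M x).

Definition jacobson (R : pzRingType) (x : R) : Prop :=
  forall L : R -> Prop, maximal_left_ideal L -> L x.

Definition projection (R : pzRingType) (star : R -> R) (e : R) : Prop :=
  e * e = e /\ star e = e.

Definition strongly_J_star_clean (R : pzRingType) (star : R -> R) : Prop :=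
  forall a : R, exists e u : R,
    projection star e /\ jacobson u /\ a = e + u /\ a * e = e * a.

Definition strongly_star_clean (R : pzRingType) (star : R -> R) : Prop :=
  forall a : R, exists e u : R,
    projection star e /\ is_unit u /\ a = e + u /\ e * u = u * e.

(* R/M is isomorphic to Z_2 as rings, written on representatives:
   f : R -> 'Z_2 induces a well-defined, injective ring map on R/M
   (f x = f y <-> x - y \in M) that is a unital ring homomorphism and onto. *)
Definition quotient_iso_Z2 (R : pzRingType) (M : R -> Prop) : Prop :=
  exists f : R -> 'Z_2,
    (forall x y, f x = f y <-> M (x - y)) /\
    (forall x y, f (x + y) = f x + f y) /\
    (forall x y, f (x * y) = f x * f y) /\
    f 1 = 1 /\
    (forall z : 'Z_2, exists x, f x = z).

(* If a = e + u with u in J(R) and e a commuting projection, then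
   a = (1 - e) + (u + 2e - 1), where 2e - 1 squares to 1, so the new remainder
   is a unit; moreover a^2 - a = u (2e + u - 1) lies in J(R), hence in every
   maximal ideal M, so R/M is a simple Boolean ring, i.e. Z_2.
   Conversely, strong *-cleanness makes every idempotent a projection, and an
   idempotent fixed by the involution together with all its corner
   perturbations e + e r (1 - e) is central.  For a unit u and any x, write
   1 - x (1 - u) = f + v: if f were nonzero, a maximal ideal M containing
   1 - f would contain u - 1 and f - 1 (as R/M = Z_2), hence the unit v.
   So f = 0, i.e. 1 - u lies in J(R); in particular u - 1 and 2 = 1 - (-1) do,
   and a = e + u = (1 - e) + ((u - 1) + 2e) is strongly J-*-clean. *)

From mathcomp Require Import all_boot all_order all_algebra.
From mathcomp Require Import boolp classical_sets.
Set Implicit Arguments. Unset Strict Implicit. Unset Printing Implicit Defensive.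
Import GRing.Theory.
Local Open Scope classical_set_scope.
Local Open Scope ring_scope.

Lemma Zorn_bigcup_above (T : Type) (P : set (set T)) (A0 : set T) :
    (forall F : set (set T), F `<=` P -> total_on F subset -> F !=set0 ->
      P (\bigcup_(X in F) X)) ->
  P A0 -> exists2 A, A0 `<=` A & P A /\ forall B, P B -> A `<=` B -> B `<=` A.
Proof.
move=> Pchain PA0.
(* Adjoining [A0] to every member of a chain makes the empty chain harmless. *)
have [|A [PA Amax]] := @Zorn_bigcup T (fun X => P (A0 `|` X)).
  move=> F FP Ftot; have [->|/set0P[X0 FX0]] := eqVneq F set0.
    by rewrite bigcup_set0 setU0.
  suff -> : A0 `|` \bigcup_(X in F) X = \bigcup_(Y in [set A0 `|` X | X in F]) Y.
    apply: Pchain; last by exists (A0 `|` X0), X0.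
      by move=> _ [X FX <-]; exact: FP.
    move=> _ _ [X FX <-] [Y FY <-].
    by case: (Ftot X Y FX FY) => XY; [left|right]; apply: setUS.
  apply/seteqP; split=> x.
  - case=> [A0x|[X FX Xx]]; first by exists (A0 `|` X0); [exists X0|left].
    by exists (A0 `|` X); [exists X|right].
  - by move=> [_ [X FX <-] [A0x|Xx]]; [left|right; exists X].
exists (A0 `|` A) => //; split=> // B PB AB x Bx; right.
have A0B : A0 `<=` B by move=> y A0y; apply: AB; left.
apply: contrapT => nAx; apply: (Amax B); last by rewrite (setUidPr _ _).2.
by split=> [y Ay|BA]; [apply: AB; right|exact/nAx/BA].
Qed.

Section Ideals.
Variable R : pzRingType.
Implicit Types (I J L M : set R) (a r x y : R).

Lemma left_ideal0 L : left_ideal L -> L 0.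
Proof. by case. Qed.

Lemma left_idealD L x y : left_ideal L -> L x -> L y -> L (x + y).
Proof. by case=> _ [+ _]; apply. Qed.

Lemma left_idealN L x : left_ideal L -> L x -> L (- x).
Proof. by case=> _ [_ [+ _]]; apply. Qed.

Lemma left_idealB L x y : left_ideal L -> L x -> L y -> L (x - y).
Proof. by move=> HL Lx Ly; apply: left_idealD => //; apply: left_idealN. Qed.

Lemma left_idealMl L r x : left_ideal L -> L x -> L (r * x).
Proof. by case=> _ [_ [_]]; apply. Qed.

Lemma two_sided_idealMr M x r : two_sided_ideal M -> M x -> M (x * r).
Proof. by case=> _; apply. Qed.

Lemma left_ideal_left_inv L u : left_ideal L -> ~ L 1 ->
  (exists v, v * u = 1) -> ~ L u.
Proof. by move=> HL L1 [v vu] Lu; apply: L1; rewrite -vu; apply: left_idealMl. Qed.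

Lemma left_ideal_add I J : left_ideal I -> left_ideal J ->
  left_ideal [set a + b | a in I & b in J].
Proof.
move=> HI HJ; split; [|split; [|split]].
- by exists 0; [exact: left_ideal0|exists 0; [exact: left_ideal0|rewrite addr0]].
- move=> _ _ [a1 Ia1 [b1 Jb1 <-]] [a2 Ia2 [b2 Jb2 <-]].
  exists (a1 + a2); first exact: left_idealD.
  by exists (b1 + b2); [exact: left_idealD|rewrite addrACA].
- move=> _ [a Ia [b Jb <-]]; exists (- a); first exact: left_idealN.
  by exists (- b); [exact: left_idealN|rewrite opprD].
- move=> r _ [a Ia [b Jb <-]]; exists (r * a); first exact: left_idealMl.
  by exists (r * b); [exact: left_idealMl|rewrite mulrDr].
Qed.

Lemma two_sided_ideal_add I J : two_sided_ideal I -> two_sided_ideal J ->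
  two_sided_ideal [set a + b | a in I & b in J].
Proof.
move=> [HI HIr] [HJ HJr]; split; first exact: left_ideal_add.
move=> r _ [a Ia [b Jb <-]]; exists (a * r); first exact: HIr.
by exists (b * r); [exact: HJr|rewrite mulrDl].
Qed.

Definition lprincipal a : set R := [set x * a | x in setT].

Lemma left_ideal_lprincipal a : left_ideal (lprincipal a).
Proof.
split; [|split; [|split]].
- by exists 0; rewrite ?mul0r.
- by move=> _ _ [x _ <-] [y _ <-]; exists (x + y); rewrite ?mulrDl.
- by move=> _ [x _ <-]; exists (- x); rewrite ?mulNr.
- by move=> r _ [x _ <-]; exists (r * x); rewrite ?mulrA.
Qed.

Lemma two_sided_lprincipal a : (forall r, GRing.comm a r) ->
  two_sided_ideal (lprincipal a).
Proof.
move=> ac; split; first exact: left_ideal_lprincipal.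
by move=> r _ [x _ <-]; exists (x * r); rewrite // -!mulrA ac.
Qed.

Lemma lprincipal1 a : lprincipal a 1 <-> exists v, v * a = 1.
Proof. by split=> [[v _ va]|[v va]]; exists v. Qed.

Lemma left_ideal_bigcup (F : set (set R)) : F `<=` @left_ideal R ->
  total_on F subset -> F !=set0 -> left_ideal (\bigcup_(X in F) X).
Proof.
move=> FI Ftot [X0 FX0]; have HF X : F X -> left_ideal X := FI X.
split; [|split; [|split]].
- by exists X0 => //; exact: left_ideal0 (HF _ FX0).
- move=> x y [X FX Xx] [Y FY Yy].
  have [XY|YX] := Ftot X Y FX FY.
  + by exists Y => //; apply: left_idealD (HF _ FY) (XY _ Xx) Yy.
  + by exists X => //; apply: left_idealD (HF _ FX) Xx (YX _ Yy).
- by move=> x [X FX Xx]; exists X => //; apply: left_idealN (HF _ FX) Xx.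
- by move=> r x [X FX Xx]; exists X => //; apply: left_idealMl (HF _ FX) Xx.
Qed.

Lemma maximal_left_ideal_above I : left_ideal I -> ~ I 1 ->
  exists2 L, maximal_left_ideal L & I `<=` L.
Proof.
move=> HI I1.
have [|//|L IL [[HL L1] Lmax]] :=
  @Zorn_bigcup_above R (fun L => left_ideal L /\ ~ L 1) I.
  move=> F FP Ftot F0; split; last by move=> [X /FP[_]].
  by apply: left_ideal_bigcup => // X /FP[].
by exists L => //; do 2!split=> //; move=> L' HL' LL' L'1; apply: Lmax.
Qed.

Lemma maximal_ideal_above I : two_sided_ideal I -> ~ I 1 ->
  exists2 M, maximal_ideal M & I `<=` M.
Proof.
move=> HI I1.
have [|//|M IM [[HM M1] Mmax]] :=
  @Zorn_bigcup_above R (fun M => two_sided_ideal M /\ ~ M 1) I.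
  move=> F FP Ftot F0; split; last by move=> [X /FP[_]].
  split; first by apply: left_ideal_bigcup => // X /FP[[]].
  by move=> r x [X FX Xx]; exists X => //; apply: two_sided_idealMr (FP X FX).1 Xx.
by exists M => //; do 2!split=> //; move=> M' HM' MM' M'1; apply: Mmax.
Qed.

End Ideals.

Section Jacobson.
Variable R : pzRingType.
Implicit Types (M : set R) (j r s u x : R).

Lemma jacobson_left_ideal : left_ideal (@jacobson R).
Proof.
split; [|split; [|split]].
- by move=> L [HL _]; exact: left_ideal0.
- by move=> x y Jx Jy L mL; apply: left_idealD (mL.1) (Jx L mL) (Jy L mL).
- by move=> x Jx L mL; apply: left_idealN (mL.1) (Jx L mL).
- by move=> r x Jx L mL; apply: left_idealMl (mL.1) (Jx L mL).
Qed.

Lemma jacobsonP j : jacobson j <-> forall x, exists v, v * (1 - x * j) = 1.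
Proof.
split=> [Jj x|Jinv L [HL [L1 Lmax]]].
  apply: contrapT => ninv.
  have [|L mL sL] := maximal_left_ideal_above (left_ideal_lprincipal (1 - x * j)).
    by move/lprincipal1.
  apply: mL.2.1; rewrite -(subrK (x * j) 1).
  apply: left_idealD mL.1 (sL _ _) (left_idealMl _ jacobson_left_ideal Jj L mL).
  by exists 1; rewrite ?mul1r.
pose L' := [set a + b | a in L & b in lprincipal j].
have HL' : left_ideal L' := left_ideal_add HL (left_ideal_lprincipal j).
have LL' : L `<=` L'.
  by move=> a La; exists a => //; exists 0; rewrite ?addr0 //; exists 0; rewrite ?mul0r.
have [[l Ll [_ [x _ <-] lxj]]|L'1] := pselect (L' 1).
  have L1xj : L (1 - x * j) by rewrite -lxj addrK.
  by case: (left_ideal_left_inv HL L1 (Jinv x) L1xj).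
apply: (Lmax L' HL' LL' L'1); exists 0; first exact: left_ideal0.
by exists j; rewrite ?add0r //; exists 1; rewrite ?mul1r.
Qed.

Lemma jacobsonMr j r : jacobson j -> jacobson (j * r).
Proof.
move=> Jj; apply/jacobsonP => x.
have [w w_inv] := (jacobsonP j).1 Jj (r * x).
(* If [w] inverts [1 - b a] on the left, then [1 + a w b] inverts [1 - a b]. *)
exists (1 + x * j * w * r); rewrite mulrDl mul1r.
have -> : x * j * w * r * (1 - x * (j * r)) = x * j * (w * (1 - r * x * j)) * r.
  by rewrite !mulrBr !mulrBl !mulr1 !mulrA.
by rewrite w_inv mulr1 -mulrA subrK.
Qed.

Lemma jacobson_unit_subr j : jacobson j -> is_unit (1 - j).
Proof.
move=> Jj; have [v vj] := (jacobsonP j).1 Jj 1; rewrite mul1r in vj.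
have [w wv] := (jacobsonP j).1 Jj (- v).
have vE : 1 + v * j = v by rewrite -[in LHS]vj mulrBr mulr1 subrK.
rewrite mulNr opprK vE in wv.
have wE : w = 1 - j by rewrite -[LHS]mulr1 -[in LHS]vj mulrA wv mul1r.
by exists v; split; [rewrite -wE|].
Qed.

Lemma two_sided_jacobson : two_sided_ideal (@jacobson R).
Proof. by split; [exact: jacobson_left_ideal|move=> r x; exact: jacobsonMr]. Qed.

Lemma is_unitM u s : is_unit u -> is_unit s -> is_unit (u * s).
Proof.
move=> [u' [uu' u'u]] [s' [ss' s's]]; exists (s' * u'); split.
  by rewrite mulrA -(mulrA u) ss' mulr1.
by rewrite mulrA -(mulrA s') u'u mulr1.
Qed.

Lemma unit_add_jacobson s j : is_unit s -> jacobson j -> is_unit (s + j).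
Proof.
move=> Us Jj; have [t [st _]] := Us.
have -> : s + j = s * (1 - - (t * j)) by rewrite opprK mulrDr mulr1 mulrA st mul1r.
apply: is_unitM Us (jacobson_unit_subr _).
exact: left_idealN jacobson_left_ideal (left_idealMl _ jacobson_left_ideal Jj).
Qed.

Lemma jacobson_sub_maximal_ideal M : maximal_ideal M -> @jacobson R `<=` M.
Proof.
move=> [HM [M1 Mmax]] x Jx.
pose I := [set a + b | a in M & b in @jacobson R].
have HI : two_sided_ideal I := two_sided_ideal_add HM two_sided_jacobson.
have [[m Mm [j Jj mj]]|I1] := pselect (I 1).
  have [v [_ vj]] := jacobson_unit_subr Jj.
  have Mv : M (1 - j) by rewrite -mj addrK.
  by case: (left_ideal_left_inv HM.1 M1 (ex_intro _ v vj) Mv).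
apply: (Mmax I HI _ I1).
  move=> a Ma; exists a => //; exists 0; rewrite ?addr0 //.
  exact: left_ideal0 jacobson_left_ideal.
by exists 0; [exact: left_ideal0 HM.1|exists x; rewrite ?add0r].
Qed.

End Jacobson.

Section QuotientZ2.
Variable R : pzRingType.
Implicit Types (M : set R) (a x y : R).

Lemma sqr_sub_add x y : (x + y) * (x + y) - (x + y) =
  (x * x - x + (y * y - y)) + (x * y + y * x).
Proof.
rewrite mulrDl !mulrDr [y * x + _]addrC addrACA opprD.
by rewrite (addrACA (x * x) (- x)) [RHS]addrAC.
Qed.

Lemma commr_mod_boolean M : left_ideal M -> (forall a, M (a * a - a)) ->
  forall x y, M (x * y - y * x).
Proof.
move=> HM Mb x y.
have M2 z : M (z + z).
  have <- : (- z) * (- z) - (- z) - (z * z - z) = z + z.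
    by rewrite mulrNN opprK opprB addrA addrC !addrA addNr add0r.
  exact: left_idealB.
have Msym : M (x * y + y * x).
  have := left_idealB HM (Mb (x + y)) (left_idealD HM (Mb x) (Mb y)).
  by rewrite sqr_sub_add [_ + (x * y + _)]addrC addrK.
have := left_idealB HM Msym (M2 (y * x)).
by rewrite opprD addrA addrK.
Qed.

Lemma maximal_ideal_dichotomy M : maximal_ideal M ->
  (forall a, M (a * a - a)) -> forall a, M a \/ M (a - 1).
Proof.
move=> [HM [M1 Mmax]] Mb a; have [Ma|nMa] := pselect (M a); [by left|right].
(* [R] is commutative modulo [M], so the annihilator of [a] modulo [M] is a two-sided ideal. *)
pose I := [set x | M (x * a)].
have HI : two_sided_ideal I.
  split; [split; [|split; [|split]]|] => [|x y|x|r x|r x Ix]; rewrite /I /=.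
  - by rewrite mul0r; exact: left_ideal0 HM.1.
  - by rewrite mulrDl; exact: left_idealD HM.1.
  - by rewrite mulNr; exact: left_idealN HM.1.
  - by rewrite -mulrA; exact: left_idealMl HM.1.
  - have := left_idealD HM.1 (two_sided_idealMr r HM Ix)
      (left_idealMl x HM.1 (commr_mod_boolean HM.1 Mb r a)).
    by rewrite mulrBr !mulrA addrC subrK.
have I1a : I (1 - a).
  have := left_idealN HM.1 (Mb a); rewrite /I /=.
  by rewrite mulrBl mul1r opprB.
have := left_idealN HM.1 (Mmax I HI (fun x Mx => two_sided_idealMr a HM Mx) _ _ I1a).
by rewrite opprB; apply; rewrite /I /= mul1r.
Qed.

Lemma Z2_cases (z : 'Z_2) : z = 0 \/ z = 1.
Proof. by case: z => [[|[|//]] ?]; [left|right]; apply/val_inj. Qed.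

Lemma quotient_iso_Z2_dichotomy M : quotient_iso_Z2 M -> forall a, M a \/ M (a - 1).
Proof.
move=> [f [fE [fD [_ [f1 _]]]]] a.
have f0 : f 0 = 0 by apply: (@addrI _ (f 0)); rewrite -fD !addr0.
case: (Z2_cases (f a)) => fa; [left; rewrite -[a]subr0|right]; apply/fE.
  by rewrite fa f0.
by rewrite fa f1.
Qed.

Lemma dichotomy_quotient_iso_Z2 M : two_sided_ideal M -> ~ M 1 ->
  (forall a, M a \/ M (a - 1)) -> quotient_iso_Z2 M.
Proof.
move=> HM M1 D.
have excl x : M x -> M (x - 1) -> False.
  move=> Mx Mx1; apply: M1.
  by have := left_idealB HM.1 Mx Mx1; rewrite opprB addrC subrK.
pose f x : 'Z_2 := if asbool (M x) then 0 else 1.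
have f0 x : M x -> f x = 0 by move=> Mx; rewrite /f asboolT.
have f1 x : M (x - 1) -> f x = 1 by move=> Mx1; rewrite /f asboolF // => /excl; apply.
exists f; split; [|split; [|split; [|split]]].
- move=> x y; case: (D x) => Hx; case: (D y) => Hy.
  + rewrite (f0 _ Hx) (f0 _ Hy); split=> // _; exact: left_idealB HM.1 Hx Hy.
  + rewrite (f0 _ Hx) (f1 _ Hy); split=> // Hxy; exfalso; apply: (excl y) => //.
    by have := left_idealB HM.1 Hx Hxy; rewrite opprB addrC subrK.
  + rewrite (f1 _ Hx) (f0 _ Hy); split=> // Hxy; exfalso; apply: (excl x) => //.
    by have := left_idealD HM.1 Hxy Hy; rewrite subrK.
  + rewrite (f1 _ Hx) (f1 _ Hy); split=> // _.
    by have := left_idealB HM.1 Hx Hy; rewrite opprB addrA subrK.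
- have M2 : M (1 + 1) by case: (D (1 + 1)) => //; rewrite addrK.
  move=> x y; case: (D x) => Hx; case: (D y) => Hy.
  + by rewrite (f0 _ Hx) (f0 _ Hy) (f0 _ (left_idealD HM.1 Hx Hy)) addr0.
  + rewrite (f0 _ Hx) (f1 _ Hy) add0r; apply: f1.
    by have := left_idealD HM.1 Hx Hy; rewrite addrA.
  + rewrite (f1 _ Hx) (f0 _ Hy) addr0; apply: f1.
    by have := left_idealD HM.1 Hx Hy; rewrite addrAC.
  + rewrite (f1 _ Hx) (f1 _ Hy); have -> : (1 + 1 : 'Z_2) = 0 by apply/val_inj.
    apply: f0.
    have := left_idealD HM.1 (left_idealD HM.1 Hx Hy) M2.
    by rewrite addrACA !subrK.
- move=> x y; case: (D x) => Hx.
    by rewrite (f0 _ Hx) mul0r; apply: f0; exact: two_sided_idealMr HM Hx.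
  case: (D y) => Hy.
    by rewrite (f0 _ Hy) mulr0; apply: f0; exact: left_idealMl HM.1 Hy.
  rewrite (f1 _ Hx) (f1 _ Hy) mulr1; apply: f1.
  have := left_idealD HM.1 (two_sided_idealMr y HM Hx) Hy.
  by rewrite mulrBl mul1r addrA subrK.
- by apply: f1; rewrite subrr; exact: left_ideal0 HM.1.
- move=> z; case: (Z2_cases z) => ->; [exists 0; apply: f0|exists 1; apply: f1].
    exact: left_ideal0 HM.1.
  by rewrite subrr; exact: left_ideal0 HM.1.
Qed.
End QuotientZ2.

Section Idempotents.
Variable R : pzRingType.
Implicit Types (e u x : R).

Lemma comm_one_subl e x : GRing.comm e x -> GRing.comm (1 - e) x.
Proof. by move=> ex; apply/commr_sym/commrB; [exact: commr1|exact: commr_sym]. Qed.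

Lemma commr_addl_self e u : GRing.comm (e + u) e -> GRing.comm e u.
Proof. by rewrite /GRing.comm mulrDl mulrDr => /addrI. Qed.

Lemma unit_double_sub1 e : e * e = e -> is_unit (e + e - 1).
Proof.
move=> ee; have ss : (e + e - 1) * (e + e - 1) = 1.
  by rewrite mulrBl mulrBr mul1r mulr1 !mulrDl !mulrDr ee addrK opprB addrC subrK.
by exists (e + e - 1).
Qed.

Lemma sqr_sub_clean e u : e * e = e -> GRing.comm e u ->
  (e + u) * (e + u) - (e + u) = u * (e + e + u - 1).
Proof.
move=> ee eu; rewrite mulrBr mulr1 !mulrDl !mulrDr ee eu opprD addrA.
by rewrite addrAC [LHS]addrC !addrA addNr add0r.
Qed.

End Idempotents.

Section StarRing.
Variables (R : pzRingType) (star : R -> R).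
Hypothesis Hstar : is_involution star.
Implicit Types (e f r u x y : R).

Lemma starB x y : star (x - y) = star x - star y.
Proof.
have [starD _] := Hstar; have star0 : star 0 = 0.
  by apply: (@addrI _ (star 0)); rewrite -starD !addr0.
by apply: (@addIr _ (star y)); rewrite -starD !subrK.
Qed.

Lemma star1 : star 1 = 1.
Proof.
by have [_ [starM starK]] := Hstar; have := starM 1 (star 1); rewrite mul1r starK mul1r.
Qed.

Lemma projection_subr e : projection star e -> projection star (1 - e).
Proof.
move=> [ee se]; split; last by rewrite starB star1 se.
by rewrite mulrBl mul1r mulrBr mulr1 ee subrr subr0.
Qed.

Lemma idempotent_projection : strongly_star_clean star ->
  forall f, f * f = f -> star f = f.
Proof.
move=> sc f ff; have [e [v [[ee se] [[w [_ wv]] [fE ev]]]]] := sc f.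
have fe : f * e = e * f by rewrite fE mulrDl mulrDr ev.
have vE : v = f - e by rewrite fE addrC addKr.
(* [v = f - e] is a unit, and it annihilates both [e f] and [1 - e - f]. *)
have v_lreg x : (f - e) * x = 0 -> x = 0.
  by move=> vx; rewrite -[x]mul1r -wv vE -mulrA vx mulr0.
have ef : e * f = 0.
  by apply: v_lreg; rewrite mulrBl !mulrA fe -(mulrA e f f) ff ee subrr.
have /subr0_eq fE' : 1 - e - f = 0.
  apply: v_lreg; rewrite !mulrBr !mulr1 !mulrBl ff ee fe ef !subr0.
  by rewrite sub0r opprK subrK subrr.
by rewrite -fE' starB star1 se.
Qed.

Lemma idempotent_corner0 : (forall g, g * g = g -> star g = g) ->
  forall e r, e * e = e -> e * r * (1 - e) = 0.
Proof.
move=> projg e r ee; have [starD [starM _]] := Hstar.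
have ece : (1 - e) * e = 0 by rewrite mulrBl mul1r ee subrr.
have eec : e * (1 - e) = 0 by rewrite mulrBr mulr1 ee subrr.
pose a := e * r * (1 - e).
have gg : (e + a) * (e + a) = e + a.
  have ea : e * a = a by rewrite /a !mulrA ee.
  have ae : a * e = 0 by rewrite /a -mulrA ece mulr0.
  have aa : a * a = 0 by rewrite {2}/a !mulrA ae !mul0r.
  by rewrite mulrDl !mulrDr ee ea ae aa !addr0.
have := projg _ gg; rewrite starD !starM starB star1 (projg _ ee) => /addrI sa.
have := congr1 (GRing.mul e) sa.
by rewrite mulrA eec mul0r /a !mulrA ee => <-.
Qed.

Lemma idempotent_central : (forall g, g * g = g -> star g = g) ->
  forall e r, e * e = e -> GRing.comm e r.
Proof.
move=> projg e r ee.
have ee' : (1 - e) * (1 - e) = 1 - e.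
  by rewrite mulrBl mul1r mulrBr mulr1 ee subrr subr0.
have := idempotent_corner0 projg r ee; have := idempotent_corner0 projg r ee'.
rewrite subKr !mulrBr !mulrBl !mulr1 !mul1r.
by move=> /subr0_eq re /subr0_eq er; rewrite /GRing.comm er re.
Qed.

(* Trading [e] for [1 - e] shifts the remainder by the unit [2 e - 1], whose square is [1]. *)
Lemma clean_swap e u :
  projection star e -> GRing.comm e u ->
  [/\ projection star (1 - e), e + u = (1 - e) + (u + (e + e - 1))
    & GRing.comm (1 - e) (u + (e + e - 1))].
Proof.
move=> pe eu; split; first exact: projection_subr.
  by rewrite addrCA addrC !addrA subrK [1 + e]addrC addrK.
apply/comm_one_subl/commrD => //.
by apply: commrB; [apply: commrD|exact: commr1].
Qed.

Lemma one_sub_unit_jacobson : strongly_star_clean star ->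
  (forall M : set R, maximal_ideal M -> forall a, M a \/ M (a - 1)) ->
  forall u : R, is_unit u -> jacobson (1 - u).
Proof.
move=> sc D u Uu; apply/jacobsonP => x.
have [f [v [[ff _] [Uv [bE _]]]]] := sc (1 - x * (1 - u)).
suff f0 : f = 0 by case: Uv => w [_ wv]; exists w; rewrite bE f0 add0r.
apply: contrapT => fn0.
have fc r : GRing.comm (1 - f) r.
  by apply/comm_one_subl/idempotent_central => //; exact: idempotent_projection.
have [|M mM sM] := maximal_ideal_above (two_sided_lprincipal fc).
  move/lprincipal1 => [y y1f]; apply: fn0.
  by rewrite -[f]mul1r -y1f -mulrA mulrBl mul1r ff subrr mulr0.
have [HM [M1 _]] := mM.
have notM w : is_unit w -> ~ M w.
  by case=> w' [_ w'w]; apply: left_ideal_left_inv HM.1 M1 _; exists w'.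
have Mu1 : M (u - 1) by case: (D M mM u) => // /(notM _ Uu).
have Mb1 : M (1 - x * (1 - u) - 1).
  by rewrite addrAC subrr add0r -mulrN opprB; exact: left_idealMl HM.1 Mu1.
case: (D M mM f) => [Mf|Mf1].
  apply: M1; rewrite -(subrK f 1); apply: left_idealD HM.1 (sM _ _) Mf.
  by exists 1; rewrite ?mul1r.
apply: (notM v Uv); have := left_idealB HM.1 Mb1 Mf1.
by rewrite bE opprB addrA subrK addrAC subrr add0r.
Qed.

Lemma jacobson_swap_remainder e u : strongly_star_clean star ->
  (forall M : set R, maximal_ideal M -> forall a, M a \/ M (a - 1)) ->
  is_unit u -> jacobson (u + (e + e - 1)).
Proof.
move=> sc D Uu; have HJ := @jacobson_left_ideal R.
have Ju1 : jacobson (u - 1).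
  by rewrite -opprB; exact: left_idealN HJ (one_sub_unit_jacobson sc D Uu).
have J2 : jacobson (1 + 1 : R).
  rewrite -{2}[1]opprK; apply: (one_sub_unit_jacobson sc D).
  by exists (-1); rewrite mulrNN mulr1.
have -> : e + e = e * (1 + 1) by rewrite mulrDr mulr1.
rewrite addrCA addrC.
exact: left_idealD HJ Ju1 (left_idealMl e HJ J2).
Qed.

End StarRing.

Theorem proposition2p4 (R : pzRingType) (star : R -> R)
  (Hstar : is_involution star) :
  strongly_J_star_clean star <->
  (strongly_star_clean star /\
   (forall M : R -> Prop, maximal_ideal M -> quotient_iso_Z2 M)).
Proof.
split=> [Jc|[sc iso] a]; first split.
- move=> a; have [e [u [pe [Ju [aE ae]]]]] := Jc a.
  have eu : GRing.comm e u by apply: commr_addl_self; rewrite -aE.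
  have [pe' aE' eu'] := clean_swap Hstar pe eu.
  exists (1 - e), (u + (e + e - 1)); split=> //; split; last by rewrite aE.
  by rewrite addrC; apply: unit_add_jacobson (unit_double_sub1 pe.1) Ju.
- move=> M mM; have [HM [M1 _]] := mM.
  apply: dichotomy_quotient_iso_Z2 HM M1 _; apply: (maximal_ideal_dichotomy mM) => a.
  have [e [u [[ee _] [Ju [-> /commr_addl_self eu]]]]] := Jc a.
  by apply: (jacobson_sub_maximal_ideal mM); rewrite sqr_sub_clean //; exact: jacobsonMr.
have D (M : R -> Prop) (mM : maximal_ideal M) : forall b, M b \/ M (b - 1).
  exact: quotient_iso_Z2_dichotomy (iso M mM).
have [e [u [pe [Uu [aE eu]]]]] := sc a.
have [pe' aE' eu'] := clean_swap Hstar pe eu.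
exists (1 - e), (u + (e + e - 1)); split=> //; split.
  exact: jacobson_swap_remainder Hstar e u sc D Uu.
by rewrite aE aE'; split=> //; apply/commr_sym/commrD.
Qed.
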